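(* The eventually different forcing $\mathbb E$ is a union of countably many subsets each of which is centered and closed-uf-lim-linked; i.e., $\mathbb E$ is $\sigma$-$(\Lambda(\mathrm{centered})\cap\Lambda^{\lim}_{\mathrm{cuf}})$-linked.
   Context: $\mathbb E$ consists of triples $(s,k,\varphi)$ with $s\in\omega^{<\omega}$, $k<\omega$ and $\varphi:\omega\to[\omega]^{\leq k}$, ordered by $(s',k',\varphi')\leq(s,k,\varphi)$ iff $s'\supseteq s$, $k'\geq k$, $\varphi'(i)\supseteq\varphi(i)$ for all $i$, and $s'(i)\notin\varphi(i)$ for all $i\in\mathrm{dom}(s')\setminus\mathrm{dom}(s)$. For a poset $\mathbb P$ and $Q\subseteq\mathbb P$, $Q$ is closed-uf-lim-linked if for every non-principal ultrafilter $D$ on $\omega$ there are $\lim^D:Q^\omega\to Q$ and a $\mathbb P$-name $\dot D'$ of an ultrafilter extending $D$ such that for all $\bar q=\langle q_m\rangle\in Q^\omega$, $\lim^D\bar q\Vdash\{m:q_m\in\dot G\}\in\dot D'$. *)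

(* forcing is formalized via weak (Cohen)
   forcing over the ambient universe, with nice names. *)
From mathcomp Require Import all_boot.
From mathcomp Require Import finmap.
Set Implicit Arguments. Unset Strict Implicit. Unset Printing Implicit Defensive.
Local Open Scope fset_scope.

Definition ultrafilter (D : (nat -> Prop) -> Prop) : Prop :=
  D (fun _ => True) /\ ~ D (fun _ => False) /\
  (forall x y, D x -> (forall n, x n -> y n) -> D y) /\
  (forall x y, D x -> D y -> D (fun n => x n /\ y n)) /\
  (forall x, D x \/ D (fun n => ~ x n)).

Definition nonprincipal_ultrafilter (D : (nat -> Prop) -> Prop) : Prop :=
  ultrafilter D /\ forall k, ~ D (fun n => n = k).

(* Generic forcing notions for a preorder (P, le), le q p meaning q <= p
   (q is stronger than p).                                            *)
Section Forcing.
Variable P : Type.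
Variable le : P -> P -> Prop.

Definition dense_below (U : P -> Prop) (p : P) : Prop :=
  forall q, le q p -> exists r, le r q /\ U r.

(* A nice P-name for a subset of omega:  A n is the set of conditions a
   such that (n-check, a) belongs to the name. *)
Definition sname := nat -> P -> Prop.

Definition forces_in (A : sname) (n : nat) (p : P) : Prop :=
  dense_below (fun r => exists a, A n a /\ le r a) p.

Definition forces_eq (A B : sname) (p : P) : Prop :=
  forall n r, le r p -> (forces_in A n r <-> forces_in B n r).

Definition forces_sub (A B : sname) (p : P) : Prop :=
  forall n r, le r p -> forces_in A n r -> forces_in B n r.

Definition forces_inter (C A B : sname) (p : P) : Prop :=
  forall n r, le r p -> (forces_in C n r <-> (forces_in A n r /\ forces_in B n r)).

Definition forces_compl (C A : sname) (p : P) : Prop :=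
  forall n r, le r p ->
    (forces_in C n r <-> ~ exists r', le r' r /\ forces_in A n r').

Definition check_name (x : nat -> Prop) : sname := fun n _ => x n.

(* A nice P-name for a set of subsets of omega: pairs (A, a) of a name
   A for a subset of omega and a condition a. *)
Definition fname := sname -> P -> Prop.

Definition forces_mem (Dn : fname) (B : sname) (p : P) : Prop :=
  dense_below (fun r => exists A a, Dn A a /\ le r a /\ forces_eq A B r) p.

Definition forced_uf_extending (D : (nat -> Prop) -> Prop) (Dn : fname) : Prop :=
  (forall x, D x -> forall p, forces_mem Dn (check_name x) p) /\
  (forall p, ~ forces_mem Dn (check_name (fun _ => False)) p) /\
  (forall A B p, forces_mem Dn A p -> forces_sub A B p -> forces_mem Dn B p) /\
  (forall A B C p, forces_inter C A B p ->
      forces_mem Dn A p -> forces_mem Dn B p -> forces_mem Dn C p) /\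
  (forall A C p, forces_compl C A p ->
      dense_below (fun r => forces_mem Dn A r \/ forces_mem Dn C r) p).

(* The name for {m | q_m \in G} *)
Definition generic_hits (qs : nat -> P) : sname := fun m a => a = qs m.

Definition centered (Q : P -> Prop) : Prop :=
  forall (n : nat) (F : nat -> P), (forall i, (i < n)%N -> Q (F i)) ->
    exists r, forall i, (i < n)%N -> le r (F i).

Definition closed_uf_lim_linked (Q : P -> Prop) : Prop :=
  forall D, nonprincipal_ultrafilter D ->
    exists (lim : (nat -> P) -> P) (Dn : fname),
      (forall qs, (forall m, Q (qs m)) -> Q (lim qs)) /\
      forced_uf_extending D Dn /\
      (forall qs, (forall m, Q (qs m)) -> forces_mem Dn (generic_hits qs) (lim qs)).
End Forcing.

Record Econd := MkE {
  E_s : seq nat;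
  E_k : nat;
  E_phi : nat -> {fset nat};
  E_phiP : forall i, (#|` E_phi i| <= E_k)%N }.

Definition E_le (p' p : Econd) : Prop :=
  prefix (E_s p) (E_s p') /\ (E_k p <= E_k p')%N /\
  (forall i, E_phi p i `<=` E_phi p' i) /\
  (forall i, (size (E_s p) <= i < size (E_s p'))%N ->
     nth 0%N (E_s p') i \notin E_phi p i).

From mathcomp Require Import all_boot finmap.
From mathcomp Require Import boolp.
From mathcomp Require classical_sets.

(* E is the union of the countably many pieces E_(s,k) of conditions with stem s
   and width k.  Finitely many conditions with a common stem are amalgamated by
   taking the union of their slaloms, so each piece is centered.  Given an
   ultrafilter D, the limit of a sequence in E_(s,k) is (s, k, phi) where phi(i)
   consists of the j lying in phi_m(i) for D-many m; there are at most k of them.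
   If r extends finitely many such limits, each new value of its stem avoids phi_m
   for D-many m, so r is compatible with the m-th terms of all the sequences for
   D-many m.  This combinatorial property yields the forcing statement: the sets
   of D together with the sets {m | q_m in G} for lim q in G generate a forced
   proper filter, which Zorn's lemma extends to a maximal one, and a maximal forced
   filter is forced to be an ultrafilter, since otherwise it could be extended by
   a set or by its complement. *)

Set Implicit Arguments. Unset Strict Implicit. Unset Printing Implicit Defensive.

Section FamilyCat.
Variable T : Type.

Definition family_cat (j1 : nat) (F1 F2 : nat -> T) (l : nat) : T :=
  if (l < j1)%N then F1 l else F2 (l - j1).

Lemma family_catP (R : T -> Prop) j1 j2 F1 F2 :
  (forall l, (l < j1 + j2)%N -> R (family_cat j1 F1 F2 l)) <->
  (forall l, (l < j1)%N -> R (F1 l)) /\ (forall l, (l < j2)%N -> R (F2 l)).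
Proof.
rewrite /family_cat; split=> [H|[H1 H2] l lj].
- split=> l lj.
  + by have := H l (ltn_addr _ lj); rewrite lj.
  + by have := H (j1 + l); rewrite ltn_add2l (ltnNge (j1 + l)) leq_addr addKn; apply.
- case: ifP => [|/negbT]; first exact: H1.
  by rewrite -leqNgt => j1l; apply: H2; rewrite ltn_subLR.
Qed.

End FamilyCat.

Section Ultrafilter.
Variable D : (nat -> Prop) -> Prop.
Hypothesis D_uf : ultrafilter D.

Lemma uf_true : D (fun _ => True).
Proof. by case: D_uf. Qed.

Lemma uf_mono x y : D x -> (forall n, x n -> y n) -> D y.
Proof. by case: D_uf => _ [_ [mono _]]; apply: mono. Qed.

Lemma uf_and x y : D x -> D y -> D (fun n => x n /\ y n).
Proof. by case: D_uf => _ [_ [_ [and _]]]; apply: and. Qed.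

Lemma uf_witness x : D x -> exists n, x n.
Proof.
move=> Dx; apply: contrapT => none; case: D_uf => _ [Dfalse _]; apply: Dfalse.
by apply: (uf_mono Dx) => n xn; apply: none; exists n.
Qed.

Lemma uf_not x : ~ D x -> D (fun n => ~ x n).
Proof. by case: D_uf => _ [_ [_ [_ /(_ x) []]]]. Qed.

Lemma uf_forall_lt (X : nat -> nat -> Prop) k :
  (forall a, (a < k)%N -> D (X a)) -> D (fun n => forall a, (a < k)%N -> X a n).
Proof.
elim: k => [|k IHk] DX; first by apply: (uf_mono uf_true) => n _ a.
apply: (uf_mono (uf_and (IHk (fun a ak => DX a (ltnW ak))) (DX k (ltnSn k)))).
by move=> n [Xn Xkn] a; rewrite ltnS leq_eqVlt => /predU1P [-> | /Xn].
Qed.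

End Ultrafilter.

Section Forcing.
Variables (P : Type) (le : P -> P -> Prop).
Hypothesis le_refl : forall p, le p p.
Hypothesis le_trans : forall p q r, le p q -> le q r -> le p r.

Lemma dense_below_le U p q : dense_below le U p -> le q p -> dense_below le U q.
Proof. by move=> dU qp r rq; apply: dU; apply: le_trans rq qp. Qed.

Lemma dense_below_sub (U V : P -> Prop) p :
  (forall r, U r -> V r) -> dense_below le U p -> dense_below le V p.
Proof. by move=> UV dU q qp; have [r [rq /UV]] := dU q qp; exists r. Qed.

Lemma forces_in_le A n p q : forces_in le A n p -> le q p -> forces_in le A n q.
Proof. exact: dense_below_le. Qed.

Lemma forces_mem_le Dn B p q : forces_mem le Dn B p -> le q p -> forces_mem le Dn B q.
Proof. exact: dense_below_le. Qed.

Lemma forces_in_check x n p : forces_in le (check_name x) n p <-> x n.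
Proof.
split=> [fx | xn q qp]; first by have [r [_ [a []]]] := fx p (le_refl p).
by exists q; split; last exists q.
Qed.

Lemma forces_in_hits qs m r : le r (qs m) -> forces_in le (generic_hits qs) m r.
Proof.
move=> rq q qr; exists q; split=> //.
by exists (qs m); split; last exact: le_trans qr rq.
Qed.

Definition inter_name (X Y : sname P) : sname P :=
  fun n a => exists x y, [/\ X n x, Y n y, le a x & le a y].

Lemma forces_in_inter X Y n p :
  forces_in le (inter_name X Y) n p <-> forces_in le X n p /\ forces_in le Y n p.
Proof.
split=> [fXY | [fX fY] q qp].
- split=> q qp; have [r [rq [a [[x [y [Xx Yy ax ay]]] ra]]]] := fXY q qp;
    exists r; split=> //.
  + by exists x; split=> //; apply: le_trans ra ax.
  + by exists y; split=> //; apply: le_trans ra ay.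
- have [r1 [r1q [x [Xx r1x]]]] := fX q qp.
  have [r2 [r2r1 [y [Yy r2y]]]] := fY r1 (le_trans r1q qp).
  exists r2; split; first exact: le_trans r2r1 r1q.
  by exists r2; split=> //; exists x, y; split=> //; apply: le_trans r2r1 r1x.
Qed.

Lemma forces_inter_name X Y p : forces_inter le (inter_name X Y) X Y p.
Proof. by move=> n r _; apply: forces_in_inter. Qed.

Definition subname (Dn Dn' : fname P) : Prop := forall B a, Dn B a -> Dn' B a.

Lemma forces_mem_subname Dn Dn' B p :
  subname Dn Dn' -> forces_mem le Dn B p -> forces_mem le Dn' B p.
Proof.
move=> sub fDn; apply: dense_below_sub fDn => r [A [a [DnA [ra eqAB]]]].
by exists A, a; split=> //; apply: sub.
Qed.

Lemma forces_mem_of_pair Dn B a r : Dn B a -> le r a -> forces_mem le Dn B r.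
Proof.
move=> DnB ra q qr; exists q; split=> //.
by exists B, a; split=> //; split; [apply: le_trans qr ra | split].
Qed.

Definition saturated (N : fname P) : Prop :=
  forall A B a r, N A a -> le r a -> forces_eq le A B r -> N B r.

Lemma saturated_le N B a r : saturated N -> N B a -> le r a -> N B r.
Proof. by move=> satN NB ra; apply: satN NB ra _ => n r' _; split. Qed.

Lemma forces_mem_saturated N B p :
  saturated N -> forces_mem le N B p <-> dense_below le (N B) p.
Proof.
move=> satN; split; apply: dense_below_sub => r.
- by move=> [A [a [NA [ra eqAB]]]]; apply: satN NA ra eqAB.
- by move=> NB; exists B, r; split=> //; split=> // n r' _; split.
Qed.

Lemma saturated_forces_mem Dn : saturated (forces_mem le Dn).
Proof.
move=> A B a r DnA ra eqAB q qr.
have [r' [r'q [A' [a' [DnA' [r'a' eqA'A]]]]]] := DnA q (le_trans qr ra).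
exists r'; split=> //; exists A', a'; split=> //; split=> // n s sr'.
apply: iff_trans (eqA'A n s sr') (eqAB n s _).
by apply: le_trans sr' (le_trans r'q qr).
Qed.

Definition uf_lim_linked_with (D : (nat -> Prop) -> Prop) (Q : P -> Prop)
    (lim : (nat -> P) -> P) : Prop :=
  forall j (Qs : nat -> nat -> P), (forall l, (l < j)%N -> forall m, Q (Qs l m)) ->
  forall r, (forall l, (l < j)%N -> le r (lim (Qs l))) ->
  D (fun m => exists2 r', le r' r & forall l, (l < j)%N -> le r' (Qs l m)).

Section ForcedFilters.
Variable D : (nat -> Prop) -> Prop.

Record forced_filter (Dn : fname P) : Prop := ForcedFilter {
  forced_filter_check : forall x, D x -> forall p, forces_mem le Dn (check_name x) p;
  forced_filter_proper : forall p, ~ forces_mem le Dn (check_name (fun _ => False)) p;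
  forced_filter_sub : forall A B p,
    forces_mem le Dn A p -> forces_sub le A B p -> forces_mem le Dn B p;
  forced_filter_inter : forall A B C p, forces_inter le C A B p ->
    forces_mem le Dn A p -> forces_mem le Dn B p -> forces_mem le Dn C p }.

(* Otherwise implicit arguments are inferred through the unfolding of [forces_mem]. *)
Arguments forced_filter_check {Dn} _ {x} _ p.
Arguments forced_filter_proper {Dn} _ p.
Arguments forced_filter_sub {Dn} _ {A B p}.
Arguments forced_filter_inter {Dn} _ {A B C p}.

Lemma forced_filter_saturated N : saturated N ->
  (forall x p, D x -> N (check_name x) p) ->
  (forall r, ~ N (check_name (fun _ => False)) r) ->
  (forall A B r, N A r -> forces_sub le A B r -> N B r) ->
  (forall A B C r, forces_inter le C A B r -> N A r -> N B r -> N C r) ->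
  forced_filter N.
Proof.
move=> satN Ncheck Nproper Nsub Ninter.
have memN B p := forces_mem_saturated B p satN.
split.
- by move=> x Dx p; apply/memN => q qp; exists q; split=> //; apply: Ncheck.
- by move=> p /memN /(_ p (le_refl p)) [r [_ /Nproper]].
- move=> A B p /memN NA AB; apply/memN => q qp.
  have [r [rq NAr]] := NA q qp; exists r; split=> //; apply: Nsub NAr _.
  by move=> n r' r'r; apply: AB; apply: le_trans r'r (le_trans rq qp).
- move=> A B C p CAB /memN NA /memN NB; apply/memN => q qp.
  have [r1 [r1q NAr1]] := NA q qp.
  have [r2 [r2r1 NBr2]] := NB r1 (le_trans r1q qp).
  exists r2; split; first exact: le_trans r2r1 r1q.
  apply: Ninter _ (saturated_le satN NAr1 r2r1) NBr2 => n r' r'r2; apply: CAB.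
  by apply: le_trans r'r2 (le_trans r2r1 (le_trans r1q qp)).
Qed.

Lemma forced_filter_chain (I : Type) (Ch : I -> Prop) (Dns : I -> fname P) i0 :
  Ch i0 -> (forall i, Ch i -> forced_filter (Dns i)) ->
  (forall i k, Ch i -> Ch k -> subname (Dns i) (Dns k) \/ subname (Dns k) (Dns i)) ->
  forced_filter (fun B r => exists2 i, Ch i & forces_mem le (Dns i) B r).
Proof.
move=> Chi0 filt chain; apply: forced_filter_saturated.
- move=> A B a r [i Chi DiA] ra eqAB; exists i => //.
  exact: saturated_forces_mem DiA ra eqAB.
- by move=> x p Dx; exists i0 => //; exact (forced_filter_check (filt i0 Chi0) Dx p).
- by move=> r [i Chi]; apply: forced_filter_proper (filt i Chi) r.
- move=> A B r [i Chi DiA] AB; exists i => //.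
  exact (forced_filter_sub (filt i Chi) DiA AB).
- move=> A B C r CAB [i Chi DiA] [k Chk DkB].
  have [ik|ki] := chain i k Chi Chk.
  + exists k => //.
    exact (forced_filter_inter (filt k Chk) CAB (forces_mem_subname ik DiA) DkB).
  + exists i => //.
    exact (forced_filter_inter (filt i Chi) CAB DiA (forces_mem_subname ki DkB)).
Qed.

Lemma forced_filter_maximal Dn0 : forced_filter Dn0 ->
  exists Dm, [/\ subname Dn0 Dm, forced_filter Dm &
    forall Dn, forced_filter Dn -> subname Dm Dn -> subname Dn Dm].
Proof.
move=> filt0.
pose T := {Dn : fname P | forced_filter Dn /\ subname Dn0 Dn}.
pose R (s t : T) := `[< subname (sval s) (sval t) >].
have t0 : T := exist _ Dn0 (conj filt0 (fun B a => id)).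
have Rrefl t : R t t by apply/asboolP.
have Rtrans r s t : R r s -> R s t -> R r t.
  by move=> /asboolP rs /asboolP st; apply/asboolP => B a /rs /st.
have Rchain (Ch : T -> Prop) : classical_sets.total_on Ch R ->
    exists t, forall s, Ch s -> R s t.
  move=> total; have [[s0 Chs0]|empty] := pselect (exists s, Ch s); last first.
    by exists t0 => s Chs; case: empty; exists s.
  have chain s t : Ch s -> Ch t -> subname (sval s) (sval t) \/ subname (sval t) (sval s).
    by move=> Chs Cht; case: (total s t Chs Cht) => /asboolP; [left | right].
  have filtU := forced_filter_chain (Dns := fun s : T => sval s) Chs0
    (fun s _ => proj1 (svalP s)) chain.
  have subU : subname Dn0 (fun B r => exists2 s, Ch s & forces_mem le (sval s) B r).
    move=> B a Dn0B; exists s0 => //.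
    exact: forces_mem_of_pair (proj2 (svalP s0) B a Dn0B) _.
  exists (exist _ _ (conj filtU subU) : T) => s Chs; apply/asboolP => B a /= sB.
  by exists s => //; apply: forces_mem_of_pair sB _.
have [[Dm [filtm subm]] maxm] := classical_sets.ZL_preorder t0 Rrefl Rtrans Rchain.
exists Dm; split=> // Dn filtn mn.
have subn : subname Dn0 Dn by move=> B a /subm /mn.
by apply/asboolP; apply: (maxm (exist _ Dn (conj filtn subn))); apply/asboolP.
Qed.

Section Extension.
Variables (Dm : fname P) (A C : sname P) (p q : P).
Hypotheses (filt : forced_filter Dm) (CA : forces_compl le C A p) (qp : le q p).
Hypothesis C_nowhere : forall r, le r q -> ~ forces_mem le Dm C r.

(* Below q, the filter generated by Dm together with A. *)
Definition extension_name : fname P := fun B r =>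
  forces_mem le Dm B r \/
  le r q /\ exists2 A', forces_mem le Dm A' r & forces_sub le (inter_name A A') B r.

Lemma extension_of_mem B r : le r q -> forces_mem le Dm B r ->
  le r q /\ exists2 A', forces_mem le Dm A' r & forces_sub le (inter_name A A') B r.
Proof. by move=> rq DmB; split=> //; exists B => // n r' _ /forces_in_inter[]. Qed.

Lemma extension_name_saturated : saturated extension_name.
Proof.
move=> B B' a r [DmB | [aq [A' DmA' AA'B]]] ra eqBB'.
  by left; apply: saturated_forces_mem DmB ra eqBB'.
right; split; first exact: le_trans ra aq.
exists A'; first exact: forces_mem_le DmA' ra.
move=> n r' r'r AA'n; apply/(eqBB' n r' r'r); apply: AA'B AA'n.
exact: le_trans r'r ra.
Qed.

Lemma extension_name_proper r : ~ extension_name (check_name (fun _ => False)) r.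
Proof.
case=> [|[rq [A' DmA' AA'0]]]; first exact: forced_filter_proper filt r.
apply: (C_nowhere rq (forced_filter_sub filt DmA' _)) => n r' r'r A'n.
have r'p : le r' p by apply: le_trans r'r (le_trans rq qp).
apply/(CA n r'p) => -[r'' [r''r' An]].
have r''r : le r'' r := le_trans r''r' r'r.
apply: (forces_in_check (fun _ => False) n r'').1; apply: AA'0 => //.
by apply/forces_in_inter; split=> //; apply: forces_in_le A'n r''r'.
Qed.

Lemma extension_name_inter B B' B'' r : forces_inter le B'' B B' r ->
  extension_name B r -> extension_name B' r -> extension_name B'' r.
Proof.
move=> BB'B'' EB EB'.
have [rq | notq] := pselect (le r q); last first.
  left; case: EB EB' => [DmB | [/notq []]] [DmB' | [/notq []]].
  exact (forced_filter_inter filt BB'B'' DmB DmB').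
have ext E : extension_name E r ->
    exists2 A', forces_mem le Dm A' r & forces_sub le (inter_name A A') E r.
  by case=> [/(extension_of_mem rq)|] [].
have [A1 DmA1 AA1B] := ext _ EB; have [A2 DmA2 AA2B'] := ext _ EB'.
right; split=> //; exists (inter_name A1 A2).
  exact (forced_filter_inter filt (@forces_inter_name A1 A2 r) DmA1 DmA2).
move=> n r' r'r /forces_in_inter [An /forces_in_inter [A1n A2n]].
apply/(BB'B'' n r' r'r); split.
- by apply: AA1B => //; apply/forces_in_inter.
- by apply: AA2B' => //; apply/forces_in_inter.
Qed.

Lemma forced_filter_extension : forced_filter extension_name.
Proof.
apply: forced_filter_saturated extension_name_saturated _ extension_name_proper _
  extension_name_inter.
- by move=> x r Dx; left; exact (forced_filter_check filt Dx r).
- move=> B B' r [DmB | [rq [A' DmA' AA'B]]] BB'.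
    by left; exact (forced_filter_sub filt DmB BB').
  right; split=> //; exists A' => // n r' r'r AA'n.
  by apply: BB' => //; apply: AA'B.
Qed.

Lemma extension_name_A : D (fun _ => True) -> extension_name A q.
Proof.
move=> DT; right; split=> //; exists (check_name (fun _ => True)).
  exact (forced_filter_check filt DT q).
by move=> n r' _ /forces_in_inter[].
Qed.

End Extension.

Lemma maximal_forced_filter_ultra Dm : D (fun _ => True) -> forced_filter Dm ->
  (forall Dn, forced_filter Dn -> subname Dm Dn -> subname Dn Dm) ->
  forall A C p, forces_compl le C A p ->
    dense_below le (fun r => forces_mem le Dm A r \/ forces_mem le Dm C r) p.
Proof.
move=> DT filt maxm A C p CA q qp; apply: contrapT => undecided.
have C_nowhere r : le r q -> ~ forces_mem le Dm C r.
  by move=> rq DmC; apply: undecided; exists r; split=> //; right.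
have sub_ext : subname Dm (extension_name Dm A q).
  by move=> B a DmB; left; apply: forces_mem_of_pair DmB (le_refl a).
have DmA := maxm _ (forced_filter_extension filt CA qp C_nowhere) sub_ext A q
  (extension_name_A A q filt DT).
by apply: undecided; exists q; split=> //; left; apply: forces_mem_of_pair DmA (le_refl q).
Qed.

Lemma forced_uf_above Dn0 : D (fun _ => True) -> forced_filter Dn0 ->
  exists2 Dn, subname Dn0 Dn & forced_uf_extending le D Dn.
Proof.
move=> DT filt0; have [Dm [sub0 filt maxm]] := forced_filter_maximal filt0.
exists Dm => //; case: (filt) => check proper subc inter; do !split => //.
by move=> A C p; apply: maximal_forced_filter_ultra.
Qed.

Section LimHits.
Hypothesis D_uf : ultrafilter D.
Variables (Q : P -> Prop) (lim : (nat -> P) -> P).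
Hypothesis linked : uf_lim_linked_with D Q lim.

(* The filter generated by D and the sets {m | qs_m in G} for the sequences qs whose
   limit lies in G. *)
Definition lim_hits_filter : fname P := fun B r =>
  exists2 x, D x & exists j (Qs : nat -> nat -> P),
    [/\ forall l, (l < j)%N -> forall m, Q (Qs l m),
        forall l, (l < j)%N -> le r (lim (Qs l)) &
        forall n r', le r' r -> x n ->
          (forall l, (l < j)%N -> forces_in le (generic_hits (Qs l)) n r') ->
          forces_in le B n r'].

Lemma lim_hits_filter_saturated : saturated lim_hits_filter.
Proof.
move=> B B' a r [x Dx [j [Qs [QQs alim xB]]]] ra eqBB'.
exists x => //; exists j, Qs; split=> //.
  by move=> l lj; apply: le_trans ra (alim l lj).
move=> n r' r'r xn hits; apply/(eqBB' n r' r'r); apply: xB => //.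
exact: le_trans r'r ra.
Qed.

Lemma forced_filter_lim_hits : forced_filter lim_hits_filter.
Proof.
apply: forced_filter_saturated lim_hits_filter_saturated _ _ _ _.
- move=> x p Dx; exists x => //; exists 0, (fun _ _ => p).
  by split=> // n r' _ xn _; apply/forces_in_check.
- move=> r [x Dx [j [Qs [QQs rlim x0]]]].
  have [m [xm [r' r'r r'Qs]]] := uf_witness D_uf (uf_and D_uf Dx (linked QQs rlim)).
  apply: (forces_in_check (fun _ => False) m r').1; apply: x0 => // l lj.
  exact: forces_in_hits (r'Qs l lj).
- move=> B B' r [x Dx [j [Qs [QQs rlim xB]]]] BB'.
  by exists x => //; exists j, Qs; split=> // n r' r'r xn hits; apply: BB' (xB _ _ _ _ _).
- move=> B1 B2 C r CB [x1 Dx1 [j1 [Qs1 [Q1 lim1 xB1]]]] [x2 Dx2 [j2 [Qs2 [Q2 lim2 xB2]]]].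
  exists (fun n => x1 n /\ x2 n); first exact: uf_and.
  exists (j1 + j2)%N, (family_cat j1 Qs1 Qs2); split.
  + by apply/(family_catP (fun qs => forall m, Q (qs m))).
  + by apply/(family_catP (fun qs => le r (lim qs))).
  + move=> n r' r'r [x1n x2n].
    move=> /(family_catP (fun qs => forces_in le (generic_hits qs) n r')) [hits1 hits2].
    by apply/(CB n r' r'r); split; [apply: xB1 | apply: xB2].
Qed.

Lemma lim_hits_filter_lim qs :
  (forall m, Q (qs m)) -> lim_hits_filter (generic_hits qs) (lim qs).
Proof.
move=> Qqs; exists (fun _ => True); first exact: uf_true.
exists 1%N, (fun _ => qs); split=> [l _ | l _ | n r' _ _]; first exact: Qqs.
  exact: le_refl.
by move=> hits; apply: (hits 0%N).
Qed.

Lemma forced_uf_lim_hits : exists Dn, forced_uf_extending le D Dn /\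
  forall qs, (forall m, Q (qs m)) -> forces_mem le Dn (generic_hits qs) (lim qs).
Proof.
have [Dn sub uf] := forced_uf_above (uf_true D_uf) forced_filter_lim_hits.
exists Dn; split=> // qs Qqs.
exact: forces_mem_of_pair (sub _ _ (lim_hits_filter_lim Qqs)) (le_refl _).
Qed.

End LimHits.
End ForcedFilters.

Theorem closed_uf_lim_linked_of Q :
  (forall D, nonprincipal_ultrafilter D -> exists2 lim,
     (forall qs, (forall m, Q (qs m)) -> Q (lim qs)) & uf_lim_linked_with D Q lim) ->
  closed_uf_lim_linked le Q.
Proof.
move=> lims D nD; have [lim Qlim linked] := lims D nD.
have [Dn [uf hits]] := forced_uf_lim_hits (proj1 nD) linked.
by exists lim, Dn.
Qed.

End Forcing.

Local Open Scope fset_scope.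

Lemma leq_card_bigfcup (I : Type) (K : choiceType) (r : seq I) (Pr : pred I)
    (F : I -> {fset K}) :
  (#|` \bigcup_(i <- r | Pr i) F i| <= \sum_(i <- r | Pr i) #|` F i|)%N.
Proof.
elim/big_rec2: _ => [|i n U _ IH]; first by rewrite cardfs0.
exact: leq_trans (leq_card_fsetU _ _).1 (leq_add (leqnn _) IH).
Qed.

Lemma fset_cover_bounded (T : choiceType) (S : T -> Prop) c :
  (forall s : seq T, uniq s -> (forall x, x \in s -> S x) -> (size s <= c)%N) ->
  exists X : {fset T}, (#|` X| <= c)%N /\ forall x, S x -> x \in X.
Proof.
elim: c S => [|c IHc] S bounded.
  exists fset0; split=> [|x Sx]; first by rewrite cardfs0.
  suff : (size [:: x] <= 0)%N by [].
  by apply: bounded => // y; rewrite inE => /eqP ->.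
have [[x0 Sx0] | noS] := pselect (exists x, S x); last first.
  by exists fset0; split=> [|x Sx]; [rewrite cardfs0 | case: noS; exists x].
have bounded' s : uniq s -> (forall x, x \in s -> S x /\ x <> x0) -> (size s <= c)%N.
  move=> us sS; have x0s : x0 \notin s by apply/negP => /sS [].
  rewrite -ltnS; apply: (bounded (x0 :: s)); first by rewrite /= x0s.
  by move=> x /predU1P [-> | /sS []].
have [X [cardX SX]] := IHc _ bounded'.
exists (x0 |` X); split; first by rewrite cardfsU1 -add1n leq_add ?leq_b1.
move=> x Sx; rewrite !inE; have [// | xx0] := eqVneq x x0.
by rewrite SX //; split=> //; apply/eqP.
Qed.

Lemma nth_prefix (T : eqType) (x0 : T) (s t : seq T) i :
  prefix s t -> (i < size s)%N -> nth x0 t i = nth x0 s i.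
Proof. by move/prefixP=> [u ->] si; rewrite nth_cat si. Qed.

Definition E_stem_admissible (s : seq nat) (p : Econd) : Prop :=
  prefix (E_s p) s /\
  forall i, (size (E_s p) <= i < size s)%N -> nth 0%N s i \notin E_phi p i.

Lemma E_stem_admissible_self p : E_stem_admissible (E_s p) p.
Proof.
split=> [|i /andP [si ilt]]; first exact: prefix_refl.
by rewrite ltnNge si in ilt.
Qed.

Lemma E_le_refl p : E_le p p.
Proof. by have [pre new] := E_stem_admissible_self p; do !split. Qed.

Lemma E_le_trans p q r : E_le p q -> E_le q r -> E_le p r.
Proof.
move=> [pq_s [pq_k [pq_phi pq_new]]] [qr_s [qr_k [qr_phi qr_new]]].
split; first exact: prefix_trans qr_s pq_s.
split; first exact: leq_trans qr_k pq_k.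
split; first by move=> i; apply: fsubset_trans (qr_phi i) (pq_phi i).
move=> i /andP [ri ip]; case: (ltnP i (size (E_s q))) => iq.
  by rewrite (nth_prefix _ pq_s iq); apply: qr_new; rewrite ri iq.
have qi : (size (E_s q) <= i < size (E_s p))%N by rewrite iq ip.
by apply: contra (pq_new i qi); apply: (fsubsetP (qr_phi i)).
Qed.

(* The piece E_(s,k), with the pair (s, k) coded by [c]. *)
Definition E_block (c : nat) (p : Econd) : Prop := choice.pickle (E_s p, E_k p) = c.

Lemma E_block_same c p p' :
  E_block c p -> E_block c p' -> E_s p = E_s p' /\ E_k p = E_k p'.
Proof. by rewrite /E_block => <- /(pcan_inj choice.pickleK) [-> ->]. Qed.

Lemma E_amalg_widthP (r : Econd) (G : nat -> Econd) (j i : nat) :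
  (#|` E_phi r i `|` \bigcup_(l <- iota 0 j) E_phi (G l) i| <=
   E_k r + \sum_(l <- iota 0 j) E_k (G l))%N.
Proof.
apply: leq_trans (leq_card_fsetU _ _).1 _; apply: leq_add (E_phiP r i) _.
apply: leq_trans (leq_card_bigfcup _ _ _) _.
by apply: leq_sum => l _; apply: E_phiP.
Qed.

Definition E_amalg (r : Econd) (G : nat -> Econd) (j : nat) : Econd :=
  @MkE (E_s r) (E_k r + \sum_(l <- iota 0 j) E_k (G l))
    (fun i => E_phi r i `|` \bigcup_(l <- iota 0 j) E_phi (G l) i) (E_amalg_widthP r G j).

Lemma E_amalg_le_l r G j : E_le (E_amalg r G j) r.
Proof.
have [pre new] := E_stem_admissible_self r.
by do !split=> //=; [apply: leq_addr | move=> i; apply: fsubsetUl].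
Qed.

Lemma E_amalg_le r G j l :
  (l < j)%N -> E_stem_admissible (E_s r) (G l) -> E_le (E_amalg r G j) (G l).
Proof.
move=> lj [pre avoid]; do !split=> //=.
  apply: leq_trans _ (leq_addl (E_k r) _).
  by rewrite (big_rem l) ?mem_iota //= leq_addr.
move=> i; apply: fsubset_trans (fsubsetUr _ _).
by apply: bigfcup_sup; rewrite ?mem_iota.
Qed.

Lemma E_block_centered c : centered E_le (E_block c).
Proof.
move=> n F FQ; exists (E_amalg (F 0%N) F n) => l ln; apply: E_amalg_le => //.
have [sF _] := E_block_same (FQ l ln) (FQ 0%N (leq_ltn_trans (leq0n l) ln)).
by rewrite -sF; apply: E_stem_admissible_self.
Qed.

Section ELimit.
Variable D : (nat -> Prop) -> Prop.
Hypothesis D_uf : ultrafilter D.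

Definition E_lim_phi_spec (qs : nat -> Econd) (i : nat) (X : {fset nat}) : Prop :=
  (#|` X| <= E_k (qs 0%N))%N /\ forall j, D (fun m => j \in E_phi (qs m) i) -> j \in X.

Lemma E_lim_phi_exists qs i :
  (forall m, E_k (qs m) <= E_k (qs 0%N))%N -> exists X, E_lim_phi_spec qs i X.
Proof.
move=> width; apply: fset_cover_bounded => s us sD.
have Dall : D (fun m => forall a, (a < size s)%N -> nth 0%N s a \in E_phi (qs m) i).
  by apply: uf_forall_lt => // a aS; apply: sD; apply: mem_nth.
have [m sm] := uf_witness D_uf Dall.
apply: leq_trans (width m); apply: leq_trans (E_phiP (qs m) i).
apply: uniq_leq_size us _ => j js.
by have := sm (index j s); rewrite index_mem js nth_index //; apply.
Qed.

(* Junk value [fset0] when the widths of [qs] exceed that of [qs 0]. *)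
Definition E_lim_phi (qs : nat -> Econd) (i : nat) : {fset nat} :=
  if pselect (exists X, E_lim_phi_spec qs i X) is left h then sval (cid h) else fset0.

Lemma E_lim_phi_card qs i : (#|` E_lim_phi qs i| <= E_k (qs 0%N))%N.
Proof.
rewrite /E_lim_phi; case: pselect => [h | _]; last by rewrite cardfs0.
exact: proj1 (svalP (cid h)).
Qed.

Lemma E_lim_phi_avoid qs i j : (forall m, E_k (qs m) <= E_k (qs 0%N))%N ->
  j \notin E_lim_phi qs i -> D (fun m => j \notin E_phi (qs m) i).
Proof.
move=> width; rewrite /E_lim_phi; case: pselect => [h jX | []]; last first.
  exact: E_lim_phi_exists.
have notD : ~ D (fun m => j \in E_phi (qs m) i).
  by move=> /(proj2 (svalP (cid h))) jin; rewrite jin in jX.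
by apply: (uf_mono D_uf (uf_not D_uf notD)) => m /negP.
Qed.

Definition E_lim (qs : nat -> Econd) : Econd :=
  @MkE (E_s (qs 0%N)) (E_k (qs 0%N)) (E_lim_phi qs) (E_lim_phi_card qs).

Lemma E_block_lim c qs : (forall m, E_block c (qs m)) -> E_block c (E_lim qs).
Proof. by move=> /(_ 0%N). Qed.

Lemma E_lim_admissible c qs r : (forall m, E_block c (qs m)) ->
  E_le r (E_lim qs) -> D (fun m => E_stem_admissible (E_s r) (qs m)).
Proof.
move=> Qqs [pre [_ [_ avoid]]].
have same m := E_block_same (Qqs m) (Qqs 0%N).
have width m : (E_k (qs m) <= E_k (qs 0%N))%N by rewrite (proj2 (same m)).
have Davoid : D (fun m => forall i, (i < size (E_s r))%N ->
    (size (E_s (qs 0%N)) <= i)%N -> nth 0%N (E_s r) i \notin E_phi (qs m) i).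
  apply: uf_forall_lt => // i ir; case: (leqP (size (E_s (qs 0%N))) i) => [si | ilt].
    apply: (uf_mono D_uf (E_lim_phi_avoid width (avoid i _))) => [|m ? _] //.
    by rewrite si ir.
  by apply: (uf_mono D_uf (uf_true D_uf)).
apply: (uf_mono D_uf Davoid) => m avm; rewrite /E_stem_admissible (proj1 (same m)).
by split=> // i /andP [si ir]; apply: avm.
Qed.

Lemma E_uf_lim_linked c : uf_lim_linked_with E_le D (E_block c) E_lim.
Proof.
move=> j Qs QQs r rlim.
have Dadm : D (fun m => forall l, (l < j)%N -> E_stem_admissible (E_s r) (Qs l m)).
  by apply: uf_forall_lt => // l lj; apply: E_lim_admissible (QQs l lj) (rlim l lj).
apply: (uf_mono D_uf Dadm) => m adm.
exists (E_amalg r (fun l => Qs l m) j); first exact: E_amalg_le_l.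
by move=> l lj; apply: E_amalg_le lj (adm l lj).
Qed.

End ELimit.

Theorem corollary3p29 :
  exists Q : nat -> Econd -> Prop,
    (forall p : Econd, exists n, Q n p) /\
    (forall n, centered E_le (Q n) /\ closed_uf_lim_linked E_le (Q n)).
Proof.
exists E_block; split; first by move=> p; exists (choice.pickle (E_s p, E_k p)).
move=> c; split; first exact: E_block_centered.
apply: (closed_uf_lim_linked_of E_le_refl E_le_trans) => D [D_uf _].
exists (E_lim D); first exact: E_block_lim.
exact: E_uf_lim_linked.
Qed.
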